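(* Let $\mathcal{A}$ be a Banach algebra and $X$ a left Banach $\mathcal{A}$-module with action $\pi_\ell:\mathcal{A}\times X\to X$. Then: (i) $\pi_\ell^{****}(x',a'')\in X^*$ for all $x'\in X^*$ and $a''\in\mathcal{A}^{**}$ (where $X^*\subseteq X^{***}$ canonically) if and only if $Z_1(\pi_\ell)=\mathcal{A}^{**}$. (ii) The mapping $x''\mapsto\pi_\ell^{**}(x'',x')$ from $X^{**}$ into $\mathcal{A}^*$ is weak$^*$-to-weak continuous for all $x'\in X^*$ if and only if $Z_1(\pi_\ell)=\mathcal{A}^{**}$. (iii) If for every $x'''\in X^{***}$ the mapping $x''\mapsto\pi_\ell^{*****}(x'',x''')$ from $X^{**}$ (canonically embedded in $X^{****}$) into $\mathcal{A}^{***}$ is weak$^*$-to-weak$^*$ continuous, then for every $a''\in\mathcal{A}^{**}$ the mapping $x''\mapsto\pi_\ell^{***}(a'',x'')$ from $X^{**}$ into $X^{**}$ is weak$^*$-to-weak continuous, and so $Z_1(\pi_\ell)=\mathcal{A}^{**}$.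
   Context: Iterated adjoints of $\pi_\ell$: $\pi_\ell^*:X^*\times\mathcal{A}\to X^*$, $\langle\pi_\ell^*(x',a),x\rangle=\langle x',\pi_\ell(a,x)\rangle$; $\pi_\ell^{**}:X^{**}\times X^*\to\mathcal{A}^*$, $\langle\pi_\ell^{**}(x'',x'),a\rangle=\langle x'',\pi_\ell^*(x',a)\rangle$; $\pi_\ell^{***}:\mathcal{A}^{**}\times X^{**}\to X^{**}$, $\langle\pi_\ell^{***}(a'',x''),x'\rangle=\langle a'',\pi_\ell^{**}(x'',x')\rangle$; $\pi_\ell^{****}:X^{***}\times\mathcal{A}^{**}\to X^{***}$, $\langle\pi_\ell^{****}(x''',a''),x''\rangle=\langle x''',\pi_\ell^{***}(a'',x'')\rangle$; $\pi_\ell^{*****}:X^{****}\times X^{***}\to\mathcal{A}^{***}$, $\langle\pi_\ell^{*****}(x'''',x'''),a''\rangle=\langle x'''',\pi_\ell^{****}(x''',a'')\rangle$. The first topological center is $Z_1(\pi_\ell)=\{a''\in\mathcal{A}^{**}: x''\mapsto\pi_\ell^{***}(a'',x'')\text{ is weak}^*\text{-to-weak}^*\text{ continuous on }X^{**}\}$. ''Weak'' on $\mathcal{A}^*$ means $\sigma(\mathcal{A}^*,\mathcal{A}^{**})$ and on $X^{**}$ means $\sigma(X^{**},X^{***})$. *)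

From HB Require Import structures.
From mathcomp Require Import all_boot all_order all_algebra.
From mathcomp Require Import all_classical all_reals all_analysis.
From Stdlib Require Import List.
Set Implicit Arguments. Unset Strict Implicit. Unset Printing Implicit Defensive.
Import Order.TTheory GRing.Theory Num.Theory.
Import numFieldNormedType.Exports.
Local Open Scope classical_set_scope.
Local Open Scope ring_scope.

(* A (sub)space of a function-like carrier type, together with its vector
   operations and its norm, given as the relation  nbound v c  <-> ||v|| <= c.
   Iterated (continuous) duals are built from it, so that X^*, X^**, ... are
   the sets of bounded linear functionals on the previous level, with the
   dual (operator) norm. *)
Record nspace (K : numFieldType) := NSpace {
  ncar : Type;
  nmem : set ncar;
  nadd : ncar -> ncar -> ncar;
  nscale : K -> ncar -> ncar;
  nbound : ncar -> K -> Prop }.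
Arguments ncar {K} n.
Arguments nmem {K} n _.
Arguments nadd {K} n _ _.
Arguments nscale {K} n _ _.
Arguments nbound {K} n _ _.

Definition base (K : numFieldType) (V : normedModType K) : nspace K :=
  @NSpace K V setT (fun u v => u + v) (fun k v => k *: v)
    (fun v c => `|v| <= c).

Definition dual_bound (K : numFieldType) (S : nspace K) (f : ncar S -> K) (c : K) :=
  forall v, nmem S v -> forall d, nbound S v d -> `|f v| <= c * d.

Definition lin_on (K : numFieldType) (S : nspace K) (f : ncar S -> K) :=
  (forall u v, nmem S u -> nmem S v -> f (nadd S u v) = f u + f v) /\
  (forall k u, nmem S u -> f (nscale S k u) = k * f u).

Definition dual (K : numFieldType) (S : nspace K) : nspace K :=
  @NSpace K (ncar S -> K)
    (fun f => lin_on f /\ exists M, dual_bound f M)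
    (fun f g v => f v + g v) (fun k f v => k * f v)
    (@dual_bound K S).

(* The weak topology sigma(D, E) on the set memD (of a carrier V) given by the
   pairing p with the elements of memE: U is open iff each point v of U in D
   has a basic neighbourhood {v' in D : |p v' w - p v w| < e, w in s} inside
   U, for some finite family s of elements of E and some e > 0. *)
Definition wopen (K : numFieldType) (V W : Type) (memD : set V) (memE : set W)
    (p : V -> W -> K) (U : set V) :=
  forall v, memD v -> U v ->
    exists (s : list W) (e : K), 0 < e /\ (forall w, In w s -> memE w) /\
      (forall v', memD v' -> (forall w, In w s -> `|p v' w - p v w| < e) -> U v').

Definition wcont (K : numFieldType) (V W V' W' : Type)
    (memD : set V) (memE : set W) (pD : V -> W -> K)
    (memC : set V') (memG : set W') (pC : V' -> W' -> K) (f : V -> V') :=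
  (forall d, memD d -> memC (f d)) /\
  (forall U, wopen memC memG pC U -> wopen memD memE pD (fun d => U (f d))).

Definition ev (K : numFieldType) (V : Type) (F : V -> K) (v : V) := F v.
Definition vee (K : numFieldType) (V : Type) (v : V) (F : V -> K) := F v.

Definition can_emb (K : numFieldType) (V : Type) (v : V) : (V -> K) -> K :=
  fun F => F v.

Section Adjoints.
Variables (K : numFieldType) (A X : Type) (pil : A -> X -> X).
Definition pi1 (x' : X -> K) (a : A) : X -> K := fun x => x' (pil a x).
Definition pi2 (x'' : (X -> K) -> K) (x' : X -> K) : A -> K :=
  fun a => x'' (pi1 x' a).
Definition pi3 (a'' : (A -> K) -> K) (x'' : (X -> K) -> K) : (X -> K) -> K :=
  fun x' => a'' (pi2 x'' x').
Definition pi4 (x''' : ((X -> K) -> K) -> K) (a'' : (A -> K) -> K)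
  : ((X -> K) -> K) -> K := fun x'' => x''' (pi3 a'' x'').
Definition pi5 (x'''' : (((X -> K) -> K) -> K) -> K) (x''' : ((X -> K) -> K) -> K)
  : ((A -> K) -> K) -> K := fun a'' => x'''' (pi4 x''' a'').
End Adjoints.

Definition Z1 (K : numFieldType) (A X : normedModType K) (pil : A -> X -> X)
  : set ((A -> K) -> K) :=
  fun a'' => nmem (dual (dual (base A))) a'' /\
    wcont (nmem (dual (dual (base X)))) (nmem (dual (base X))) (@ev K _)
          (nmem (dual (dual (base X)))) (nmem (dual (base X))) (@ev K _)
          (pi3 pil a'').

Definition banach_algebra (K : numFieldType) (A : completeNormedModType K)
    (mul : A -> A -> A) :=
  (forall a b c, mul (mul a b) c = mul a (mul b c)) /\
  (forall a b c, mul (a + b) c = mul a c + mul b c) /\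
  (forall a b c, mul a (b + c) = mul a b + mul a c) /\
  (forall k a b, mul (k *: a) b = k *: mul a b) /\
  (forall k a b, mul a (k *: b) = k *: mul a b) /\
  (forall a b, `|mul a b| <= `|a| * `|b|).

Definition left_banach_module (K : numFieldType) (A X : completeNormedModType K)
    (mul : A -> A -> A) (pil : A -> X -> X) :=
  (forall a b x, pil (mul a b) x = pil a (pil b x)) /\
  (forall a b x, pil (a + b) x = pil a x + pil b x) /\
  (forall a x y, pil a (x + y) = pil a x + pil a y) /\
  (forall k a x, pil (k *: a) x = k *: pil a x) /\
  (forall k a x, pil a (k *: x) = k *: pil a x) /\
  (exists M, 0 <= M /\ forall a x, `|pil a x| <= M * `|a| * `|x|).

From Pilot Require Import Defs.
From HB Require Import structures.
From mathcomp Require Import all_boot all_order all_algebra.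
From mathcomp Require Import all_classical all_reals all_analysis.
From Stdlib Require Import List.
Set Implicit Arguments. Unset Strict Implicit. Unset Printing Implicit Defensive.
Import Order.TTheory GRing.Theory Num.Theory.
Import numFieldNormedType.Exports.
Local Open Scope classical_set_scope.
Local Open Scope ring_scope.

(* All three parts reduce to one condition: for every a'' in A** and x' in X*,
   the scalar map x'' |-> pi_l^***(a'', x'')(x') = a''(pi_l^**(x'', x')) is
   weak*-continuous on X**.  A map into a weak topology is continuous iff each
   of its coordinates is, and the coordinates of the maps in (ii) and (iii) are
   exactly these scalar maps, in (iii) after restricting x''' to X* inside X***.
   For (i), a linear functional on X** that is weak*-continuous at 0 vanishes
   on the common kernel of finitely many evaluations at points of X*, hence is
   a linear combination of them, i.e. evaluation at a point of X*. *)

Section WeakTopology.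
Variables (K : numFieldType) (V W : Type).
Variables (memD : set V) (memE : set W) (pD : V -> W -> K).

(* [Defs.wopen U] unfolds to [forall v, memD v -> U v -> wnbhd v U]. *)
Definition wnbhd (d0 : V) (P : V -> Prop) :=
  exists (s : list W) (e : K), 0 < e /\ (forall w, In w s -> memE w) /\
    (forall d, memD d -> (forall w, In w s -> `|pD d w - pD d0 w| < e) -> P d).

Definition wcont_at (g : V -> K) d0 :=
  forall e, 0 < e -> wnbhd d0 (fun d => `|g d - g d0| < e).

Definition wcont_fun (g : V -> K) := forall d0, memD d0 -> wcont_at g d0.

Lemma wnbhdI d0 P Q : wnbhd d0 P -> wnbhd d0 Q -> wnbhd d0 (fun d => P d /\ Q d).
Proof.
move=> [s1 [e1 [e1_gt0 [s1E HP]]]] [s2 [e2 [e2_gt0 [s2E HQ]]]].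
have e12 : e1 >=< e2 by apply: real_comparable; apply: gtr0_real.
exists (s1 ++ s2), (Num.min e1 e2); split; first by rewrite comparable_lt_min // e1_gt0.
split=> [w /(in_app_or _ _ _) [] | d Dd Hd]; [exact: s1E | exact: s2E |].
have lt_min w : In w (s1 ++ s2) -> `|pD d w - pD d0 w| < e1 /\ `|pD d w - pD d0 w| < e2.
  by move=> /Hd; rewrite comparable_lt_min // => /andP.
by split; [apply: HP | apply: HQ] => // w Hw; case: (lt_min w) => //;
  apply: in_or_app; auto.
Qed.

Lemma wnbhd_all (U : Type) d0 (P : U -> V -> Prop) (s : list U) :
  (forall u, In u s -> wnbhd d0 (P u)) -> wnbhd d0 (fun d => forall u, In u s -> P u d).
Proof.
elim: s => [|u s IH] Hs.
  by exists nil, 1; split; [exact: ltr01 | split=> // ? []].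
have [t [e [e_gt0 [tE H]]]] :=
  wnbhdI (Hs u (or_introl erefl)) (IH (fun u' Hu' => Hs u' (or_intror Hu'))).
exists t, e; do 2!split=> //.
by move=> d Dd /(H d Dd) [Pu Ps] u' [<-|]; [exact: Pu | exact: Ps].
Qed.

Lemma wcont_fun_pairing w : memE w -> wcont_fun (fun d => pD d w).
Proof.
move=> Ew d0 _ e e_gt0; exists [:: w], e; do 2!split=> //; first by move=> w' [<-|[]].
by move=> d _; apply; left.
Qed.

Lemma eq_wcont_fun (g h : V -> K) :
  (forall d, memD d -> g d = h d) -> wcont_fun g -> wcont_fun h.
Proof.
move=> gh Hg d0 Dd0 e e_gt0; have [s [e' [e'_gt0 [sE H]]]] := Hg d0 Dd0 e e_gt0.
by exists s, e'; do 2!split=> //; move=> d Dd /(H d Dd); rewrite !gh.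
Qed.

End WeakTopology.

Lemma wopen_ball (K : numFieldType) (V W : Type) (memC : set V) (memG : set W)
    (pC : V -> W -> K) (w : W) (t e : K) :
  memG w -> Defs.wopen memC memG pC (fun c => `|pC c w - t| < e).
Proof.
move=> Gw c _ Hc; exists [:: w], (e - `|pC c w - t|).
split; first by rewrite subr_gt0.
split=> [w' [<-|[]] // | c' _ /(_ w (or_introl erefl)) Hc'].
by apply: le_lt_trans (ler_distD (pC c w) _ _) _; rewrite -ltrBrDr.
Qed.

Lemma wcontP (K : numFieldType) (V W V' W' : Type)
    (memD : set V) (memE : set W) (pD : V -> W -> K)
    (memC : set V') (memG : set W') (pC : V' -> W' -> K) (f : V -> V') :
  wcont memD memE pD memC memG pC f <->
  (forall d, memD d -> memC (f d)) /\
  (forall w, memG w -> wcont_fun memD memE pD (fun d => pC (f d) w)).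
Proof.
split=> [[fC Hf] | [fC Hf]]; split=> //.
  move=> w Gw d0 Dd0 e e_gt0.
  have := Hf _ (wopen_ball (t := pC (f d0) w) (e := e) Gw) d0 Dd0.
  by rewrite subrr normr0; apply.
move=> U HU d0 Dd0 Ud0; have [s [e [e_gt0 [sG HU']]]] := HU _ (fC _ Dd0) Ud0.
have [t [e' [e'_gt0 [tE H]]]] := wnbhd_all (fun w Hw => Hf w (sG w Hw) d0 Dd0 e e_gt0).
by exists t, e'; do 2!split=> //; move=> d Dd /(H d Dd); apply: HU' (fC _ Dd).
Qed.

Section DualSpace.
Variables (K : numFieldType) (S : nspace K).

Lemma dual_add f g :
  nmem (dual S) f -> nmem (dual S) g -> nmem (dual S) (nadd (dual S) f g).
Proof.
move=> [[f_add f_scale] [Mf Hf]] [[g_add g_scale] [Mg Hg]]; split; first split.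
- by move=> u v Su Sv /=; rewrite f_add // g_add // addrACA.
- by move=> k u Su /=; rewrite f_scale // g_scale // mulrDr.
- exists (Mf + Mg) => v Sv d Hd /=; rewrite mulrDl.
  by apply: le_trans (ler_normD _ _) _; apply: lerD; [apply: Hf | apply: Hg].
Qed.

Lemma dual_scale k f : nmem (dual S) f -> nmem (dual S) (nscale (dual S) k f).
Proof.
move=> [[f_add f_scale] [Mf Hf]]; split; first split.
- by move=> u v Su Sv /=; rewrite f_add // mulrDr.
- by move=> c u Su /=; rewrite f_scale // mulrCA.
- exists (`|k| * Mf) => v Sv d Hd /=; rewrite normrM -mulrA.
  by apply: ler_wpM2l => //; apply: Hf.
Qed.

Lemma dual_zero : nmem (dual S) (fun _ => 0).
Proof.
split; first split.
- by move=> u v _ _; rewrite addr0.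
- by move=> k u _; rewrite mulr0.
- by exists 0 => v _ d _; rewrite normr0 mul0r.
Qed.

Lemma lin_on_dual0 (F : ncar (dual S) -> K) : lin_on F -> F (fun _ => 0) = 0.
Proof.
move=> [_ F_scale]; have := F_scale 0 _ dual_zero.
have -> : nscale (dual S) 0 (fun _ => 0) = (fun _ => 0).
  by apply: funext => v /=; rewrite mul0r.
by rewrite mul0r.
Qed.

Definition dual_comb (l : list (K * ncar (dual S))) : ncar (dual S) :=
  fun v => \sum_(q <- l) q.1 * q.2 v.

Lemma dual_comb_nil : dual_comb [::] = (fun _ => 0).
Proof. by apply: funext => v; rewrite /dual_comb big_nil. Qed.

Lemma dual_comb_cons q l :
  dual_comb (q :: l) = nadd (dual S) (nscale (dual S) q.1 q.2) (dual_comb l).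
Proof. by apply: funext => v; rewrite /dual_comb big_cons. Qed.

Lemma dual_comb_mem l :
  (forall q, In q l -> nmem (dual S) q.2) -> nmem (dual S) (dual_comb l).
Proof.
elim: l => [|q l IH] Hl.
  by rewrite dual_comb_nil; apply: dual_zero.
rewrite dual_comb_cons; apply: dual_add; first by apply: dual_scale; apply: Hl; left.
by apply: IH => q' Hq'; apply: Hl; right.
Qed.

Lemma lin_on_dual_comb (F : ncar (dual S) -> K) l :
  lin_on F -> (forall q, In q l -> nmem (dual S) q.2) ->
  F (dual_comb l) = \sum_(q <- l) q.1 * F q.2.
Proof.
move=> F_lin; elim: l => [|q l IH] Hl.
  by rewrite dual_comb_nil big_nil lin_on_dual0.
have Sq : nmem (dual S) q.2 by apply: Hl; left.
have Sl : forall q', In q' l -> nmem (dual S) q'.2 by move=> q' Hq'; apply: Hl; right.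
rewrite dual_comb_cons big_cons F_lin.1 ?F_lin.2 ?IH //.
  exact: dual_scale.
exact: dual_comb_mem.
Qed.

Lemma dual_bounded f : nmem (dual S) f -> exists c, nbound (dual S) f c.
Proof. by case. Qed.

Lemma can_emb_dual f :
  nmem (dual S) f -> nmem (dual (dual (dual S))) (@can_emb K _ f).
Proof.
move=> Sf; have [Mf Hf] := Sf.2; split; first by split.
by exists Mf => F SF d HF; rewrite /can_emb mulrC; apply: HF.
Qed.

End DualSpace.

Section CommonKernel.
Variables (K : numFieldType) (S : nspace K) (W : Type) (p : ncar S -> W -> K).
Hypothesis S_add : forall u v, nmem S u -> nmem S v -> nmem S (nadd S u v).
Hypothesis S_scale : forall k u, nmem S u -> nmem S (nscale S k u).
Hypothesis p_lin : forall w, lin_on (fun v => p v w).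

Definition common_kernel (ws : list W) (v : ncar S) := forall w, In w ws -> p v w = 0.

Lemma lin_on_sub_scale (phi : ncar S -> K) (c : K) w :
  lin_on phi -> lin_on (fun v => phi v - c * p v w).
Proof.
move=> [phi_add phi_scale]; have [pw_add pw_scale] := p_lin w; split.
- by move=> u v Su Sv; rewrite phi_add // pw_add // mulrDr opprD addrACA.
- by move=> k u Su; rewrite phi_scale // pw_scale // mulrBr mulrCA.
Qed.

(* The conclusion is [phi] applied to [v - p v w *: v1], which lies in the
   common kernel of [w :: ws]. *)
Lemma kernel_step (phi : ncar S -> K) w ws v1 :
  lin_on phi -> nmem S v1 -> p v1 w = 1 -> common_kernel ws v1 ->
  (forall v, nmem S v -> common_kernel (w :: ws) v -> phi v = 0) ->
  forall v, nmem S v -> common_kernel ws v -> phi v - phi v1 * p v w = 0.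
Proof.
move=> [phi_add phi_scale] Sv1 v1w v1ws Hphi v Sv vws.
pose u := nadd S v (nscale S (- p v w) v1).
have Su : nmem S u by apply: S_add => //; apply: S_scale.
have := Hphi u Su; rewrite /u phi_add ?phi_scale //; last exact: S_scale.
rewrite mulNr mulrC => -> // w' Hw'.
have [pw'_add pw'_scale] := p_lin w'; rewrite pw'_add ?pw'_scale //; last exact: S_scale.
case: Hw' => [<-|Hw']; first by rewrite v1w mulr1 subrr.
by rewrite vws // v1ws // mulr0 addr0.
Qed.

Lemma lincomb_of_common_kernel (ws : list W) (phi : ncar S -> K) :
  lin_on phi -> (forall v, nmem S v -> common_kernel ws v -> phi v = 0) ->
  exists l : list (K * W), (forall q, In q l -> In q.2 ws) /\
    forall v, nmem S v -> phi v = \sum_(q <- l) q.1 * p v q.2.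
Proof.
elim: ws phi => [|w ws IH] phi phi_lin Hphi.
  by exists nil; split => // v Sv; rewrite big_nil; apply: Hphi.
have [[v1 [Sv1 [v1w v1ws]]] | no_v1] :=
  pselect (exists v1, nmem S v1 /\ p v1 w = 1 /\ common_kernel ws v1).
  have [l [lws Hl]] := IH _ (lin_on_sub_scale (phi v1) w phi_lin)
    (kernel_step phi_lin Sv1 v1w v1ws Hphi).
  exists ((phi v1, w) :: l); split=> [q [<-|Hq] | v Sv]; [by left | by right; apply: lws |].
  by rewrite big_cons -Hl // addrC subrK.
suff /(IH phi phi_lin) [l [lws Hl]] :
    forall v, nmem S v -> common_kernel ws v -> phi v = 0.
  by exists l; split => // q Hq; right; apply: lws.
move=> v Sv vws; apply: Hphi => // u [<-|]; last exact: vws.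
case: (eqVneq (p v w) 0) => // vw; exfalso; apply: no_v1.
exists (nscale S (p v w)^-1 v); split; first exact: S_scale.
have [_ pw_scale] := p_lin w; split; first by rewrite pw_scale // mulVf.
by move=> w' Hw'; have [_ pw'_scale] := p_lin w'; rewrite pw'_scale // (vws w') // mulr0.
Qed.

End CommonKernel.

Lemma weak_star_continuous_eval (K : numFieldType) (T : nspace K)
    (phi : ncar (dual (dual T)) -> K) :
  lin_on phi ->
  wcont_at (nmem (dual (dual T))) (nmem (dual T)) (@ev K _) phi (fun _ => 0) ->
  exists y, nmem (dual T) y /\ forall F, nmem (dual (dual T)) F -> phi F = F y.
Proof.
move=> phi_lin /(_ 1 ltr01) [s [e [e_gt0 [sT Hs]]]].
have ev_lin (y : ncar (dual T)) : lin_on (fun F : ncar (dual (dual T)) => @ev K _ F y).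
  by [].
have phi_ker F : nmem (dual (dual T)) F ->
    common_kernel (S := dual (dual T)) (@ev K _) s F -> phi F = 0.
  move=> TF Fs; case: (eqVneq (phi F) 0) => // phiF.
  suff: (1 : K) < 1 by rewrite ltxx.
  have := Hs _ (dual_scale (phi F)^-1 TF).
  rewrite lin_on_dual0 // phi_lin.2 // mulVf // subr0 normr1; apply=> y /Fs.
  by rewrite /ev /= => ->; rewrite mulr0 subrr normr0.
have [l [ls Hl]] := lincomb_of_common_kernel (@dual_add K _) (@dual_scale K _)
  ev_lin phi_lin phi_ker.
have lT q : In q l -> nmem (dual T) q.2 by move=> /ls; apply: sT.
exists (dual_comb l); split=> [|F TF]; first exact: dual_comb_mem.
by rewrite Hl // lin_on_dual_comb //; case: TF.
Qed.

(* [pi1 pil], [pi2 pil] and [pi3 pil] are convertible to iterated [badj]s of [pil]. *)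
Definition badj (K : numFieldType) (S T U : nspace K) (B : ncar S -> ncar T -> ncar U)
  : ncar (dual U) -> ncar S -> ncar (dual T) := fun u s t => u (B s t).

(* Linearity in the first argument is left out: for [badj B] it holds in
   [ncar (dual T)] only when [T] is the whole carrier, see [bounded_rlinear_badj]. *)
Definition bounded_rlinear (K : numFieldType) (S T U : nspace K)
    (B : ncar S -> ncar T -> ncar U) :=
  [/\ forall s t, nmem S s -> nmem T t -> nmem U (B s t),
      forall s t t', nmem S s -> nmem T t -> nmem T t' ->
        B s (nadd T t t') = nadd U (B s t) (B s t'),
      forall k s t, nmem S s -> nmem T t -> B s (nscale T k t) = nscale U k (B s t) &
      exists M, forall s t cs ct, nmem S s -> nmem T t ->
        nbound S s cs -> nbound T t ct -> nbound U (B s t) (M * cs * ct)].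

Section Adjoint.
Variables (K : numFieldType) (S T U : nspace K) (B : ncar S -> ncar T -> ncar U).
Local Notation badj := (badj B).

Hypothesis B_rlin : bounded_rlinear B.

Lemma badj_bound : exists M, forall u s cu cs, nmem (dual U) u -> nmem S s ->
  nbound (dual U) u cu -> nbound S s cs -> nbound (dual T) (badj u s) (M * cu * cs).
Proof.
have [B_mem _ _ [M BM]] := B_rlin; exists M => u s cu cs _ Ss Hu Hs t Tt ct Ht.
have := Hu _ (B_mem _ _ Ss Tt) _ (BM _ _ _ _ Ss Tt Hs Ht).
by rewrite !mulrA [cu * M]mulrC.
Qed.

Hypothesis S_bounded : forall s, nmem S s -> exists c, nbound S s c.

Lemma badj_mem u s : nmem (dual U) u -> nmem S s -> nmem (dual T) (badj u s).
Proof.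
move=> Uu Ss; have [B_mem B_add B_scale _] := B_rlin.
have [[u_add u_scale] [cu Hu]] := Uu; have [cs Hs] := S_bounded Ss.
have [M BM] := badj_bound; split; first split.
- by move=> t t' Tt Tt'; rewrite /badj B_add // u_add //; apply: B_mem.
- by move=> k t Tt; rewrite /badj B_scale // u_scale //; apply: B_mem.
- by exists (M * cu * cs); apply: BM.
Qed.

Lemma bounded_rlinear_badj :
  (forall t, nmem T t) ->
  (forall s s' t, nmem S s -> nmem S s' -> B (nadd S s s') t = nadd U (B s t) (B s' t)) ->
  (forall k s t, nmem S s -> B (nscale S k s) t = nscale U k (B s t)) ->
  bounded_rlinear badj.
Proof.
move=> T_full B_addl B_scalel; have [B_mem _ _ _] := B_rlin.
split; [exact: badj_mem | | | exact: badj_bound].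
- move=> u s s' [[u_add _] _] Ss Ss'; apply: funext => t.
  by rewrite /badj B_addl // u_add //; apply: B_mem.
- move=> k u s [[_ u_scale] _] Ss; apply: funext => t.
  by rewrite /badj B_scalel // u_scale //; apply: B_mem.
Qed.

End Adjoint.

Section ModuleAdjoints.
Variables (K : numFieldType) (A X : completeNormedModType K).
Variables (mul : A -> A -> A) (pil : A -> X -> X).
Hypothesis pil_mod : left_banach_module mul pil.

Let A1 := nmem (dual (base A)).
Let A2 := nmem (dual (dual (base A))).
Let X1 := nmem (dual (base X)).
Let X2 := nmem (dual (dual (base X))).

Lemma pil_bounded_rlinear : bounded_rlinear (S := base A) (T := base X) (U := base X) pil.
Proof.
have [_ [_ [pil_addr [_ [pil_scaler [M [M_ge0 pil_bound]]]]]]] := pil_mod.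
split=> // [s t t' _ _ _ | k s t _ _ |]; [exact: pil_addr | exact: pil_scaler |].
exists M => a x ca cx _ _ /= Ha Hx; apply: le_trans (pil_bound a x) _.
by rewrite -!mulrA; apply: ler_wpM2l => //; apply: ler_pM.
Qed.

Lemma pi1_bounded_rlinear :
  bounded_rlinear (S := dual (base X)) (T := base A) (U := dual (base X)) (pi1 pil).
Proof.
have [_ [pil_addl [_ [pil_scalel _]]]] := pil_mod.
apply: bounded_rlinear_badj pil_bounded_rlinear _ _ _ _ => //.
- by move=> a _; exists `|a|; rewrite /= lexx.
- by move=> a b x _ _; apply: pil_addl.
- by move=> k a x _; apply: pil_scalel.
Qed.

Lemma pi2_bounded_rlinear : bounded_rlinear (S := dual (dual (base X)))
  (T := dual (base X)) (U := dual (base A)) (pi2 pil).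
Proof. exact: bounded_rlinear_badj pi1_bounded_rlinear (@dual_bounded _ _) _ _ _. Qed.

Lemma pi2_mem x'' x' : X2 x'' -> X1 x' -> A1 (pi2 pil x'' x').
Proof. by have [pi2_mem _ _ _] := pi2_bounded_rlinear; apply: pi2_mem. Qed.

Lemma pi3_mem a'' x'' : A2 a'' -> X2 x'' -> X2 (pi3 pil a'' x'').
Proof. exact: badj_mem pi2_bounded_rlinear (@dual_bounded _ _) a'' x''. Qed.

Lemma lin_on_pi3 a'' x' : A2 a'' -> X1 x' ->
  lin_on (S := dual (dual (base X))) (fun x'' => pi3 pil a'' x'' x').
Proof.
move=> [[a_add a_scale] _] Xx'; split=> [u v Xu Xv | k u Xu].
  exact: a_add (pi2_mem Xu Xx') (pi2_mem Xv Xx').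
exact: a_scale (pi2_mem Xu Xx').
Qed.

Lemma Z1_fullP : Z1 pil = A2 <-> forall a'', A2 a'' -> forall x', X1 x' ->
  wcont_fun X2 X1 (@ev K _) (fun x'' => pi3 pil a'' x'' x').
Proof.
split=> [Z a'' Aa x' Xx' | HP].
  have [_ /wcontP [_ Hc]] : Z1 pil a'' by rewrite Z.
  exact: Hc.
apply: funext => a''; apply: propext; split=> [[] // | Aa]; split=> //.
by apply/wcontP; split=> [x'' Xx'' | x' Xx']; [exact: pi3_mem | exact: HP].
Qed.

End ModuleAdjoints.

Theorem theorem2p7 (K : numFieldType) (A X : completeNormedModType K)
  (mul : A -> A -> A) (pil : A -> X -> X) :
  banach_algebra mul -> left_banach_module mul pil ->
  let A2 := nmem (dual (dual (base A))) in
  let A3 := nmem (dual (dual (dual (base A)))) in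
  let X1 := nmem (dual (base X)) in
  let X2 := nmem (dual (dual (base X))) in
  let X3 := nmem (dual (dual (dual (base X)))) in
  (* (i) *)
  ((forall (x' : X -> K) (a'' : (A -> K) -> K), X1 x' -> A2 a'' ->
      exists y' : X -> K, X1 y' /\
        forall x'' : (X -> K) -> K, X2 x'' -> pi4 pil (@can_emb K _ x') a'' x'' = @can_emb K _ y' x'')
   <-> Z1 pil = A2) /\
  (* (ii) *)
  ((forall x' : X -> K, X1 x' ->
      wcont X2 X1 (@ev K _) (nmem (dual (base A))) A2 (@vee K _)
            (fun x'' : (X -> K) -> K => pi2 pil x'' x'))
   <-> Z1 pil = A2) /\
  (* (iii) *)
  ((forall x''' : ((X -> K) -> K) -> K, X3 x''' ->
      wcont X2 X1 (@ev K _) A3 A2 (@ev K _)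
            (fun x'' : (X -> K) -> K => pi5 pil (@can_emb K _ x'') x'''))
   -> (forall a'' : (A -> K) -> K, A2 a'' ->
        wcont X2 X1 (@ev K _) X2 X3 (@vee K _) (pi3 pil a''))
      /\ Z1 pil = A2).
Proof.
move=> _ pil_mod A2 A3 X1 X2 X3; have Z1P := Z1_fullP pil_mod.
split; [|split].
- split=> [rep | /Z1P HP x' a'' Xx' Aa].
    apply/Z1P => a'' Aa x' Xx'; have [y' [Yy' Hy']] := rep x' a'' Xx' Aa.
    have y'_eval x'' : X2 x'' -> @ev K _ x'' y' = pi3 pil a'' x'' x'.
      by move=> Xx''; exact: esym (Hy' x'' Xx'').
    exact: eq_wcont_fun y'_eval (wcont_fun_pairing (@ev K _) Yy').
  have [y' [Yy' Hy']] := weak_star_continuous_eval (lin_on_pi3 pil_mod Aa Xx')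
    (HP a'' Aa x' Xx' _ (@dual_zero K _)).
  by exists y'; split=> // x'' Xx''; apply: Hy'.
- rewrite Z1P; split=> [H a'' Aa x' Xx' | HP x' Xx'].
    by have /wcontP [_ Hc] := H x' Xx'; apply: Hc.
  by apply/wcontP; split=> [x'' Xx'' | a'' Aa]; [exact: (pi2_mem pil_mod) | exact: HP].
- move=> H.
  have Hcont a'' : A2 a'' -> wcont X2 X1 (@ev K _) X2 X3 (@vee K _) (pi3 pil a'').
    move=> Aa; apply/wcontP; split=> [x'' Xx'' | x''' Xx'''].
      exact: (pi3_mem pil_mod).
    by have /wcontP [_ Hc] := H x''' Xx'''; apply: Hc.
  split=> //; apply/Z1P => a'' Aa x' Xx'.
  by have /wcontP [_ Hc] := Hcont a'' Aa; apply: Hc (can_emb_dual Xx').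
Qed.
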